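(* Let $\Phi:[a,b]\to\mathbb{R}$ be continuous and nowhere zero and let $x_0\in[a,b]$. For $n\ge0$, a fundamental set of solutions (basis of the solution space) of the equation $D^{(n+1)}y(x)=0$ of order $n+1$ is $\mathcal S_n=\{\mathcal Y_0(x_0,x),\dots,\mathcal Y_n(x_0,x)\}$ if $n$ is odd and $\widetilde{\mathcal S}_n=\{\widetilde{\mathcal Y}_0(x_0,x),\dots,\widetilde{\mathcal Y}_n(x_0,x)\}$ if $n$ is even. Moreover, a fundamental set of solutions of $\widetilde D^{(n+1)}y(x)=0$ of order $n+1$ is $\widetilde{\mathcal S}_n$ if $n$ is odd and $\mathcal S_n$ if $n$ is even.
   Context: For $x_0,x\in[a,b]$ the $\Phi$-power functions are defined recursively by $X^{(0)}(x_0,x)\equiv 1$, $\widetilde X^{(0)}(x_0,x)\equiv 1$ and, for $n\ge 1$, $$X^{(n)}(x_0,x)=n\int_{x_0}^x X^{(n-1)}(x_0,\xi)\,\big(\Phi(\xi)\big)^{(-1)^n}\,d\xi,\qquad \widetilde X^{(n)}(x_0,x)=n\int_{x_0}^x \widetilde X^{(n-1)}(x_0,\xi)\,\Big(\frac{1}{\Phi(\xi)}\Big)^{(-1)^n}\,d\xi.$$ For $n\ge0$, $\mathcal Y_n=\widetilde X^{(n)}$ if $n$ is odd and $\mathcal Y_n=X^{(n)}$ if $n$ is even; $\widetilde{\mathcal Y}_n=X^{(n)}$ if $n$ is odd and $\widetilde{\mathcal Y}_n=\widetilde X^{(n)}$ if $n$ is even. The $\Phi$-derivatives are $Dh=\Phi\,h'$,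 $\widetilde Dh=\frac1\Phi h'$, with $D^{(0)}h=\widetilde D^{(0)}h=h$, $D^{(k)}h=D(\widetilde D^{(k-1)}h)$, $\widetilde D^{(k)}h=\widetilde D(D^{(k-1)}h)$. In this part of the paper $\Phi$ is assumed real-valued. *)

From Stdlib Require Import Reals.
From Coquelicot Require Import Coquelicot.
Open Scope R_scope.

Definition continuous_on_cc (a b : R) (f : R -> R) : Prop :=
  forall x, a <= x <= b ->
    filterlim f (within (fun t => a <= t <= b) (locally x)) (locally (f x)).

Definition deriv_on (a b : R) (u u' : R -> R) : Prop :=
  forall x, a <= x <= b ->
    filterlim (fun h => (u (x + h) - u x) / h)
      (within (fun h => h <> 0 /\ a <= x + h <= b) (locally 0))
      (locally (u' x)).

(* Phi-power functions X^(n)(x0,x) and Xtilde^(n)(x0,x).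
   (Phi)^((-1)^n) is 1/Phi for n odd and Phi for n even;
   (1/Phi)^((-1)^n) is Phi for n odd and 1/Phi for n even. *)
Fixpoint Xpow (Phi : R -> R) (n : nat) (x0 x : R) : R :=
  match n with
  | O => 1
  | S m => INR (S m) *
      RInt (fun xi => Xpow Phi m x0 xi *
                      (if Nat.odd (S m) then / Phi xi else Phi xi)) x0 x
  end.

Fixpoint Xtpow (Phi : R -> R) (n : nat) (x0 x : R) : R :=
  match n with
  | O => 1
  | S m => INR (S m) *
      RInt (fun xi => Xtpow Phi m x0 xi *
                      (if Nat.odd (S m) then Phi xi else / Phi xi)) x0 x
  end.

Definition Ycal (Phi : R -> R) (n : nat) (x0 x : R) : R :=
  if Nat.odd n then Xtpow Phi n x0 x else Xpow Phi n x0 x.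
Definition Ytcal (Phi : R -> R) (n : nat) (x0 x : R) : R :=
  if Nat.odd n then Xpow Phi n x0 x else Xtpow Phi n x0 x.

(* Iterated Phi-derivatives, relationally on [a,b]:
   Dk a b Phi false k y z  <->  z = D^(k) y  on [a,b]
   Dk a b Phi true  k y z  <->  z = Dtilde^(k) y on [a,b]
   (all intermediate derivatives existing on [a,b]).
   D h = Phi h', Dtilde h = h'/Phi, D^(k) = D o Dtilde^(k-1),
   Dtilde^(k) = Dtilde o D^(k-1). *)
Fixpoint Dk (a b : R) (Phi : R -> R) (t : bool) (k : nat) (y z : R -> R)
  : Prop :=
  match k with
  | O => forall x, a <= x <= b -> z x = y x
  | S m => exists u u' : R -> R,
      Dk a b Phi (negb t) m y u /\ deriv_on a b u u' /\
      forall x, a <= x <= b ->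
        z x = (if t then u' x / Phi x else Phi x * u' x)
  end.

Definition is_solution (a b : R) (Phi : R -> R) (t : bool) (k : nat)
  (y : R -> R) : Prop :=
  Dk a b Phi t k y (fun _ => 0).

Definition fundamental_set (a b : R) (Phi : R -> R) (t : bool) (n : nat)
  (f : nat -> R -> R) : Prop :=
  (forall i, (i <= n)%nat -> is_solution a b Phi t (S n) (f i)) /\
  (forall c : nat -> R,
     (forall x, a <= x <= b -> sum_f_R0 (fun i => c i * f i x) n = 0) ->
     forall i, (i <= n)%nat -> c i = 0) /\
  (forall y, is_solution a b Phi t (S n) y ->
     exists c : nat -> R,
       forall x, a <= x <= b -> y x = sum_f_R0 (fun i => c i * f i x) n).

From Stdlib Require Import Reals Lra Lia Factorial.
From Coquelicot Require Import Coquelicot.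
Open Scope R_scope.

(* Write [L_true y = y'/Phi] and [L_false y = Phi y'], so that [D^(k)] and [Dtilde^(k)]
   are alternating composites of these first-order operators.  Group the Phi-power
   functions into the two families [phi_power true = Y] and [phi_power false = Ytilde];
   by the fundamental theorem of calculus the weights in their recursive definitions are
   exactly undone by one operator: [L_s (phi_power s (i+1)) = (i+1) phi_power (~s) i].
   Hence an order-[k] composite whose first operator is [L_s] maps [phi_power s i]
   ([i <= k]) to the constant [k!] if [i = k] and to [0] otherwise.  This triangularity
   shows that [phi_power s 0, ..., phi_power s n] solve the order-[(n+1)] equation and
   are linearly independent.  Conversely, if the order-[(n+1)] derivative of [y] vanishes,
   its order-[n] derivative is a constant [c], and [y - c/n! phi_power s n] solves the
   equation of order [n]; by induction every solution is a combination of the family.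
   The parity of [n] determines the first operator, hence which family is needed. *)

Lemma filterlim_within_locally_R (f : R -> R) (D : R -> Prop) (c l : R) :
  filterlim f (within D (locally c)) (locally l) <->
  forall eps : posreal, exists delta : posreal,
    forall y, D y -> Rabs (y - c) < delta -> Rabs (f y - l) < eps.
Proof.
  rewrite filterlim_locally. split; intros H eps; destruct (H eps) as [d Hd];
    exists d; intros y Hy1 Hy2; apply Hd; assumption.
Qed.

Lemma deriv_on_eps a b u u' :
  deriv_on a b u u' <-> forall x, a <= x <= b -> forall eps : posreal,
    exists delta : posreal, forall h, h <> 0 -> a <= x + h <= b -> Rabs h < delta ->
      Rabs ((u (x + h) - u x) / h - u' x) < eps.
Proof.
  unfold deriv_on. split; intros H x Hx.
  - intros eps. destruct (proj1 (filterlim_within_locally_R _ _ _ _) (H x Hx) eps) as [d Hd].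
    exists d. intros h H1 H2 H3. apply Hd; [tauto | now rewrite Rminus_0_r].
  - apply filterlim_within_locally_R. intros eps. destruct (H x Hx eps) as [d Hd].
    exists d. intros h [H1 H2] H3. rewrite Rminus_0_r in H3. auto.
Qed.

Lemma deriv_on_ext a b u u' v v' : deriv_on a b u u' ->
  (forall x, a <= x <= b -> u x = v x) -> (forall x, a <= x <= b -> u' x = v' x) ->
  deriv_on a b v v'.
Proof.
  rewrite !deriv_on_eps. intros H Eu Eu' x Hx eps.
  destruct (H x Hx eps) as [d Hd]. exists d. intros h H1 H2 H3.
  rewrite <- Eu, <- Eu, <- Eu' by auto. auto.
Qed.

Lemma deriv_on_const a b c : deriv_on a b (fun _ => c) (fun _ => 0).
Proof.
  apply deriv_on_eps. intros x _ eps. exists eps. intros h _ _ _.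
  unfold Rdiv. rewrite Rminus_eq_0, Rmult_0_l, Rminus_eq_0, Rabs_R0. apply cond_pos.
Qed.

Lemma deriv_on_lincomb a b u1 u1' u2 u2' al be :
  deriv_on a b u1 u1' -> deriv_on a b u2 u2' ->
  deriv_on a b (fun x => al * u1 x + be * u2 x) (fun x => al * u1' x + be * u2' x).
Proof.
  intros H1 H2 x Hx.
  apply filterlim_ext with
    (f := fun h => al * ((u1 (x + h) - u1 x) / h) + be * ((u2 (x + h) - u2 x) / h)).
  { intros h. unfold Rdiv. ring. }
  apply (filterlim_comp_2 (G := locally (al * u1' x)) (H := locally (be * u2' x))
           _ _ Rplus).
  - eapply filterlim_comp; [exact (H1 x Hx) |].
    exact (filterlim_scal_r (K := R_AbsRing) (V := R_NormedModule) al (u1' x)).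
  - eapply filterlim_comp; [exact (H2 x Hx) |].
    exact (filterlim_scal_r (K := R_AbsRing) (V := R_NormedModule) be (u2' x)).
  - exact (filterlim_plus (K := R_AbsRing) (V := R_NormedModule) (al * u1' x) (be * u2' x)).
Qed.

Lemma exists_small_step a b x (m : posreal) : a < b -> a <= x <= b ->
  exists h, h <> 0 /\ a <= x + h <= b /\ Rabs h < m.
Proof.
  intros Hab Hx. destruct (Rlt_le_dec x b).
  - exists (Rmin m (b - x) / 2).
    assert (0 < Rmin m (b - x)) by (apply Rmin_glb_lt; [apply cond_pos | lra]).
    pose proof (Rmin_l m (b - x)); pose proof (Rmin_r m (b - x)).
    rewrite Rabs_right; lra.
  - exists (- (Rmin m (b - a) / 2)).
    assert (0 < Rmin m (b - a)) by (apply Rmin_glb_lt; [apply cond_pos | lra]).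
    pose proof (Rmin_l m (b - a)); pose proof (Rmin_r m (b - a)).
    rewrite Rabs_left; lra.
Qed.

Lemma deriv_on_unique a b u v1 v2 x : a < b -> a <= x <= b ->
  deriv_on a b u v1 -> deriv_on a b u v2 -> v1 x = v2 x.
Proof.
  intros Hab Hx H1 H2.
  assert (Hproper : ProperFilter'
            (within (fun h => h <> 0 /\ a <= x + h <= b) (locally 0))).
  { constructor; [| apply within_filter, locally_filter].
    intros [m Hm]. destruct (exists_small_step a b x m Hab Hx) as [h [H0 [Hh Hhm]]].
    apply (Hm h); [change (Rabs (h - 0) < m); now rewrite Rminus_0_r | tauto]. }
  exact (filterlim_locally_unique (K := R_AbsRing) (V := R_NormedModule) _ _ _
           (H1 x Hx) (H2 x Hx)).
Qed.

Lemma deriv_on_continuous_on_cc a b u u' : deriv_on a b u u' -> continuous_on_cc a b u.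
Proof.
  intros H x Hx. apply filterlim_within_locally_R. intros eps.
  destruct (proj1 (deriv_on_eps a b u u') H x Hx (mkposreal 1 Rlt_0_1)) as [d Hd].
  simpl in Hd. set (L := Rabs (u' x) + 1).
  assert (HL : 0 < L) by (unfold L; pose proof (Rabs_pos (u' x)); lra).
  assert (Hdelta : 0 < Rmin d (eps / L)).
  { apply Rmin_glb_lt; [apply cond_pos | apply Rdiv_lt_0_compat; [apply cond_pos | exact HL]]. }
  exists (mkposreal _ Hdelta). simpl. intros y Hy Hyx.
  destruct (Req_dec y x) as [-> | Hne].
  { rewrite Rminus_eq_0, Rabs_R0. apply cond_pos. }
  pose proof (Rmin_l d (eps / L)). pose proof (Rmin_r d (eps / L)).
  set (h := y - x). assert (Hh : h <> 0) by (unfold h; lra).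
  specialize (Hd h Hh). replace (x + h) with y in Hd by (unfold h; ring).
  specialize (Hd Hy ltac:(fold h in Hyx; lra)).
  (* the difference quotient is within 1 of [u' x], hence bounded by [L] *)
  assert (Hq : Rabs ((u y - u x) / h) < L).
  { pose proof (Rabs_triang_inv ((u y - u x) / h) (u' x)). unfold L. lra. }
  replace (u y - u x) with (h * ((u y - u x) / h)) by (field; exact Hh).
  rewrite Rabs_mult.
  apply Rlt_le_trans with (eps / L * L); [| right; field; lra].
  fold h in Hyx. apply Rmult_le_0_lt_compat; try apply Rabs_pos; lra.
Qed.

Lemma continuous_on_cc_mult a b f g : continuous_on_cc a b f -> continuous_on_cc a b g ->
  continuous_on_cc a b (fun x => f x * g x).
Proof.
  intros Hf Hg x Hx. eapply filterlim_comp_2; [apply Hf, Hx | apply Hg, Hx |].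
  apply (filterlim_mult (K := R_AbsRing)).
Qed.

Lemma continuous_on_cc_inv a b f : continuous_on_cc a b f ->
  (forall x, a <= x <= b -> f x <> 0) -> continuous_on_cc a b (fun x => / f x).
Proof.
  intros Hf Hnz x Hx. eapply filterlim_comp; [apply Hf, Hx |]. apply continuous_Rinv. auto.
Qed.

(* Clamping to [a,b] extends a function on [a,b] to all of R, so that Coquelicot's
   results on R (FTC, mean value theorem) can be applied. *)
Definition clamp a b y := Rmax a (Rmin b y).

Lemma clamp_id a b y : a <= y <= b -> clamp a b y = y.
Proof. intros. unfold clamp, Rmax, Rmin. repeat destruct Rle_dec; lra. Qed.

Lemma clamp_in a b y : a <= b -> a <= clamp a b y <= b.
Proof. intros. unfold clamp, Rmax, Rmin. repeat destruct Rle_dec; lra. Qed.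

Lemma continuous_clamp_comp a b g y : a <= b -> continuous_on_cc a b g ->
  continuous (fun t => g (clamp a b t)) y.
Proof.
  intros Hab Hg. eapply filterlim_comp; [| apply Hg, clamp_in, Hab].
  unfold filterlim, filter_le, filtermap, within, locally.
  intros P [eps HP]. exists eps. intros z Hz. apply HP; [| apply clamp_in, Hab].
  eapply Rle_lt_trans; [| exact Hz].
  change (Rabs (clamp a b z - clamp a b y) <= Rabs (z - y)).
  unfold clamp, Rmax, Rmin. repeat destruct Rle_dec; split_Rabs; lra.
Qed.

Lemma is_derive_deriv_on a b u u' :
  (forall x, a <= x <= b -> is_derive u x (u' x)) -> deriv_on a b u u'.
Proof.
  intros H. apply deriv_on_eps. intros x Hx eps.
  destruct (proj1 (is_derive_Reals _ _ _) (H x Hx) eps (cond_pos eps)) as [d Hd].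
  exists d. intros h H1 _ H3. now apply Hd.
Qed.

Lemma deriv_on_RInt a b g x0 : a < b -> continuous_on_cc a b g -> a <= x0 <= b ->
  deriv_on a b (fun x => RInt g x0 x) g.
Proof.
  intros Hab Hg Hx0.
  set (G := fun t => g (clamp a b t)).
  assert (HG : forall y, continuous G y) by (intros; apply continuous_clamp_comp; auto; lra).
  apply (deriv_on_ext a b (fun x => RInt G x0 x) G).
  - apply is_derive_deriv_on. intros x _.
    apply (is_derive_RInt G _ x0); [| apply HG].
    apply filter_forall. intros y. apply (RInt_correct (V := R_CompleteNormedModule)).
    apply (ex_RInt_continuous (V := R_CompleteNormedModule)). intros; apply HG.
  - intros y Hy. apply RInt_ext. intros t Ht. unfold G. rewrite clamp_id; auto.
    revert Ht. unfold Rmin, Rmax. repeat destruct Rle_dec; lra.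
  - intros y Hy. unfold G. now rewrite clamp_id.
Qed.

Lemma deriv_on_is_derive_clamp a b u u' t : a < t < b -> deriv_on a b u u' ->
  is_derive (fun y => u (clamp a b y)) t (u' t).
Proof.
  intros Ht Hd. apply is_derive_Reals. intros eps Heps.
  destruct (proj1 (deriv_on_eps a b u u') Hd t ltac:(lra) (mkposreal eps Heps)) as [d Hdd].
  assert (Hm : 0 < Rmin d (Rmin (t - a) (b - t))).
  { apply Rmin_glb_lt; [apply cond_pos | apply Rmin_glb_lt; lra]. }
  exists (mkposreal _ Hm). simpl. intros h Hh Hhm.
  pose proof (Rmin_l d (Rmin (t - a) (b - t))). pose proof (Rmin_r d (Rmin (t - a) (b - t))).
  pose proof (Rmin_l (t - a) (b - t)). pose proof (Rmin_r (t - a) (b - t)).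
  assert (a <= t + h <= b) by (revert Hhm; split_Rabs; lra).
  rewrite !clamp_id by lra. apply Hdd; auto; lra.
Qed.

Lemma deriv_on_zero_constant a b u u' : a < b -> deriv_on a b u u' ->
  (forall x, a <= x <= b -> u' x = 0) -> forall x, a <= x <= b -> u x = u a.
Proof.
  intros Hab Hd H0 x Hx.
  destruct (MVT_gen (fun y => u (clamp a b y)) a x (fun _ => 0)) as [c [_ Hc]].
  - rewrite Rmin_left, Rmax_right by lra. intros t Ht.
    rewrite <- (H0 t) by lra. apply deriv_on_is_derive_clamp; auto; lra.
  - intros t _. apply continuity_pt_filterlim, continuous_clamp_comp; [lra |].
    eapply deriv_on_continuous_on_cc, Hd.
  - rewrite !clamp_id in Hc by lra. lra.
Qed.

Definition phi_step (Phi : R -> R) (s : bool) (u' : R -> R) (x : R) : R :=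
  if s then u' x / Phi x else Phi x * u' x.

Lemma Dk_ext a b Phi k : forall t y1 z1 y2 z2,
  (forall x, a <= x <= b -> y1 x = y2 x) -> (forall x, a <= x <= b -> z1 x = z2 x) ->
  Dk a b Phi t k y1 z1 -> Dk a b Phi t k y2 z2.
Proof.
  induction k as [| m IH]; simpl; intros t y1 z1 y2 z2 Ey Ez H.
  - intros x Hx. rewrite <- Ey, <- Ez by auto. auto.
  - destruct H as [u [u' [Hu [Hd Hz]]]]. exists u, u'. split; [| split; auto].
    + eapply IH; [exact Ey | | exact Hu]. auto.
    + intros x Hx. rewrite <- Ez by auto. auto.
Qed.

Lemma Dk_lincomb a b Phi k : forall t y1 z1 y2 z2 al be,
  Dk a b Phi t k y1 z1 -> Dk a b Phi t k y2 z2 ->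
  Dk a b Phi t k (fun x => al * y1 x + be * y2 x) (fun x => al * z1 x + be * z2 x).
Proof.
  induction k as [| m IH]; simpl; intros t y1 z1 y2 z2 al be H1 H2.
  - intros x Hx. rewrite H1, H2 by auto. reflexivity.
  - destruct H1 as [u1 [u1' [Hu1 [Hd1 Hz1]]]], H2 as [u2 [u2' [Hu2 [Hd2 Hz2]]]].
    exists (fun x => al * u1 x + be * u2 x), (fun x => al * u1' x + be * u2' x).
    split; [apply IH; auto | split; [apply deriv_on_lincomb; auto |]].
    intros x Hx. rewrite Hz1, Hz2 by auto. destruct t; unfold Rdiv; ring.
Qed.

Lemma Dk_scal a b Phi k t y z c : Dk a b Phi t k y z ->
  Dk a b Phi t k (fun x => c * y x) (fun x => c * z x).
Proof.
  intros H. eapply Dk_ext; [| | exact (Dk_lincomb a b Phi k t _ _ _ _ c 0 H H)];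
    intros; simpl; ring.
Qed.

Lemma Dk_sum a b Phi t k n : forall (f g : nat -> R -> R) (c : nat -> R),
  (forall i, (i <= n)%nat -> Dk a b Phi t k (f i) (g i)) ->
  Dk a b Phi t k (fun x => sum_f_R0 (fun i => c i * f i x) n)
                 (fun x => sum_f_R0 (fun i => c i * g i x) n).
Proof.
  induction n as [| m IH]; intros f g c H; simpl.
  - exact (Dk_scal a b Phi k t _ _ (c 0%nat) (H 0%nat (le_n 0))).
  - eapply Dk_ext;
      [| | exact (Dk_lincomb a b Phi k t _ _ _ _ 1 (c (S m))
                    (IH f g c ltac:(intros; apply H; lia)) (H (S m) (le_n _)))];
      intros; simpl; ring.
Qed.

Lemma Dk_unique a b Phi k : a < b -> forall t y z1 z2,
  Dk a b Phi t k y z1 -> Dk a b Phi t k y z2 -> forall x, a <= x <= b -> z1 x = z2 x.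
Proof.
  intros Hab. induction k as [| m IH]; simpl; intros t y z1 z2 H1 H2 x Hx.
  - rewrite H1, H2; auto.
  - destruct H1 as [u1 [u1' [Hu1 [Hd1 Hz1]]]], H2 as [u2 [u2' [Hu2 [Hd2 Hz2]]]].
    rewrite Hz1, Hz2 by auto.
    replace (u1' x) with (u2' x); [reflexivity |].
    apply (deriv_on_unique a b u2); auto.
    apply (deriv_on_ext a b u1 u1'); auto. intros; eapply IH; eauto.
Qed.

Lemma Dk_constant a b Phi m : forall t c y, (forall x, a <= x <= b -> y x = c) ->
  Dk a b Phi t (S m) y (fun _ => 0).
Proof.
  induction m as [| m IH]; intros t c y Hy.
  - exists y, (fun _ => 0). split; [intros x Hx; reflexivity | split].
    + apply (deriv_on_ext a b (fun _ => c) (fun _ => 0)); auto using deriv_on_const.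
      intros; symmetry; auto.
    + intros. destruct t; unfold Rdiv; ring.
  - exists (fun _ => 0), (fun _ => 0). split; [apply (IH _ c); auto | split].
    + apply deriv_on_const.
    + intros. destruct t; unfold Rdiv; ring.
Qed.

Lemma Dk_S_zero_inv a b Phi m t y : a < b -> (forall x, a <= x <= b -> Phi x <> 0) ->
  Dk a b Phi t (S m) y (fun _ => 0) -> exists c, Dk a b Phi (negb t) m y (fun _ => c).
Proof.
  intros Hab Hnz [u [u' [Hu [Hd Hz]]]].
  assert (Hu' : forall x, a <= x <= b -> u' x = 0).
  { intros x Hx. specialize (Hz x Hx). pose proof (Hnz x Hx).
    destruct t.
    - replace (u' x) with (u' x / Phi x * Phi x) by (field; auto). rewrite <- Hz. ring.
    - replace (u' x) with (/ Phi x * (Phi x * u' x)) by (field; auto). rewrite <- Hz. ring. }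
  exists (u a). eapply Dk_ext; [| | exact Hu]; auto.
  intros x Hx. exact (deriv_on_zero_constant a b u u' Hab Hd Hu' x Hx).
Qed.

Lemma odd_S n : Nat.odd (S n) = negb (Nat.odd n).
Proof. rewrite Nat.odd_succ, <- Nat.negb_odd. reflexivity. Qed.

(* [first_op t k] is the Phi-derivative applied first by [Dk _ _ _ t k]
   ([true] for [Dtilde], [false] for [D]). *)
Definition first_op (t : bool) (k : nat) : bool := xorb t (negb (Nat.odd k)).

Lemma first_op_S t m : first_op t (S m) = negb (first_op t m).
Proof. unfold first_op. rewrite odd_S. destruct t, (Nat.odd m); reflexivity. Qed.

Lemma first_op_SS t m : first_op t (S (S m)) = first_op (negb t) (S m).
Proof. unfold first_op. rewrite !odd_S. destruct t, (Nat.odd m); reflexivity. Qed.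

Lemma Dk_S_first_op a b Phi m : forall t y y' z, deriv_on a b y y' ->
  Dk a b Phi t m (phi_step Phi (first_op t (S m)) y') z -> Dk a b Phi t (S m) y z.
Proof.
  induction m as [| m IH]; intros t y y' z Hd H.
  - exists y, y'. split; [intros x Hx; reflexivity | split; auto].
    intros x Hx. rewrite H by auto. unfold phi_step, first_op. now destruct t.
  - destruct H as [u [u' [Hu [Hdu Hz]]]]. exists u, u'. split; [| split; auto].
    apply (IH (negb t) y y' u Hd). now rewrite <- first_op_SS.
Qed.

Definition phi_power (Phi : R -> R) (x0 : R) (s : bool) (i : nat) (x : R) : R :=
  if s then Ycal Phi i x0 x else Ytcal Phi i x0 x.

Definition phi_weight (Phi : R -> R) (s : bool) (x : R) : R :=
  if s then Phi x else / Phi x.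

Lemma phi_power_0 Phi x0 s x : phi_power Phi x0 s 0 x = 1.
Proof. now destruct s. Qed.

Lemma phi_power_S Phi x0 s j x : phi_power Phi x0 s (S j) x =
  INR (S j) * RInt (fun xi => phi_power Phi x0 (negb s) j xi * phi_weight Phi s xi) x0 x.
Proof.
  unfold phi_power, phi_weight, Ycal, Ytcal. simpl Xpow. simpl Xtpow. rewrite !odd_S.
  destruct s, (Nat.odd j); reflexivity.
Qed.

Section PhiPowers.

Variables (a b : R) (Phi : R -> R) (x0 : R).
Hypothesis hab : a < b.
Hypothesis hcont : continuous_on_cc a b Phi.
Hypothesis hnz : forall x, a <= x <= b -> Phi x <> 0.
Hypothesis hx0 : a <= x0 <= b.

Lemma continuous_on_cc_phi_weight s : continuous_on_cc a b (phi_weight Phi s).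
Proof. destruct s; [exact hcont | exact (continuous_on_cc_inv a b Phi hcont hnz)]. Qed.

Lemma deriv_on_phi_power_S s j : continuous_on_cc a b (phi_power Phi x0 (negb s) j) ->
  deriv_on a b (phi_power Phi x0 s (S j))
    (fun x => INR (S j) * (phi_power Phi x0 (negb s) j x * phi_weight Phi s x)).
Proof.
  intros Hc.
  set (g := fun xi => phi_power Phi x0 (negb s) j xi * phi_weight Phi s xi).
  assert (Hg : continuous_on_cc a b g)
    by exact (continuous_on_cc_mult a b _ _ Hc (continuous_on_cc_phi_weight s)).
  pose proof (deriv_on_RInt a b g x0 hab Hg hx0) as HF.
  eapply deriv_on_ext; [exact (deriv_on_lincomb _ _ _ _ _ _ (INR (S j)) 0 HF HF) | |];
    intros x _; [rewrite phi_power_S; fold g | unfold g]; ring.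
Qed.

Lemma continuous_on_cc_phi_power i : forall s, continuous_on_cc a b (phi_power Phi x0 s i).
Proof.
  induction i as [| j IH]; intros s.
  - intros x _. eapply filterlim_ext; [intros y; symmetry; apply phi_power_0 |].
    rewrite phi_power_0. apply filterlim_const.
  - eapply deriv_on_continuous_on_cc, deriv_on_phi_power_S, IH.
Qed.

Lemma phi_step_phi_power s j x : a <= x <= b ->
  phi_step Phi s (fun x => INR (S j) * (phi_power Phi x0 (negb s) j x * phi_weight Phi s x)) x
  = INR (S j) * phi_power Phi x0 (negb s) j x.
Proof.
  intros Hx. pose proof (hnz x Hx). unfold phi_step, phi_weight.
  destruct s; field; assumption.
Qed.

Lemma Dk_phi_power i : forall s k t, (i <= k)%nat -> first_op t k = s ->
  Dk a b Phi t k (phi_power Phi x0 s i) (fun _ => if Nat.eqb i k then INR (fact i) else 0).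
Proof.
  induction i as [| j IH]; intros s k t Hik Hs.
  - destruct k as [| m].
    + intros x _. now rewrite phi_power_0.
    + apply (Dk_constant a b Phi m t 1). intros. apply phi_power_0.
  - destruct k as [| m]; [lia |].
    pose proof (deriv_on_phi_power_S s j (continuous_on_cc_phi_power j (negb s))) as Hd.
    apply (Dk_S_first_op a b Phi m t _ _ _ Hd). rewrite Hs.
    assert (Hs' : first_op t m = negb s) by (rewrite <- Hs, first_op_S, Bool.negb_involutive; reflexivity).
    eapply Dk_ext; [| | exact (Dk_scal a b Phi m t _ _ (INR (S j)) (IH (negb s) m t ltac:(lia) Hs'))].
    + intros x Hx. symmetry. now apply phi_step_phi_power.
    + intros x _. simpl Nat.eqb. destruct (Nat.eqb j m); [| ring].
      change (fact (S j)) with (S j * fact j)%nat. now rewrite mult_INR.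
Qed.

Lemma phi_power_independent n : forall s c,
  (forall x, a <= x <= b -> sum_f_R0 (fun i => c i * phi_power Phi x0 s i x) n = 0) ->
  forall i, (i <= n)%nat -> c i = 0.
Proof.
  induction n as [| m IH]; intros s c H i Hi.
  - assert (i = 0%nat) by lia. subst. specialize (H a ltac:(lra)). simpl in H.
    rewrite phi_power_0 in H. lra.
  - set (t := xorb s (Nat.odd m)).
    assert (Ht : first_op t (S m) = s).
    { unfold t, first_op. rewrite odd_S. destruct s, (Nat.odd m); reflexivity. }
    (* apply the order-(m+1) operator: only the top term survives, as [c (S m) * (S m)!] *)
    pose proof (Dk_sum a b Phi t (S m) (S m) (phi_power Phi x0 s)
      (fun i _ => if Nat.eqb i (S m) then INR (fact i) else 0) c
      ltac:(intros; apply Dk_phi_power; auto)) as Hsum.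
    pose proof (Dk_constant a b Phi m t 0 _ H) as Hzero.
    pose proof (Dk_unique a b Phi (S m) hab t _ _ _ Hsum Hzero a ltac:(lra)) as E.
    simpl in E. rewrite Nat.eqb_refl in E.
    rewrite (sum_eq _ (fun _ => 0)), sum_cte in E.
    2: { intros j Hj. rewrite (proj2 (Nat.eqb_neq j (S m))) by lia. ring. }
    assert (Htop : c (S m) = 0).
    { apply (Rmult_eq_reg_r (INR (fact (S m)))); [| apply INR_fact_neq_0].
      rewrite Rmult_0_l, <- E. simpl fact. ring. }
    destruct (Nat.eq_dec i (S m)) as [-> | Hne]; [exact Htop |].
    apply (IH s); [| lia]. intros x Hx. specialize (H x Hx). simpl in H.
    rewrite Htop in H. lra.
Qed.

Lemma phi_power_spanning n : forall t y, Dk a b Phi t (S n) y (fun _ => 0) ->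
  exists c : nat -> R, forall x, a <= x <= b ->
    y x = sum_f_R0 (fun i => c i * phi_power Phi x0 (first_op t (S n)) i x) n.
Proof.
  induction n as [| m IH]; intros t y H;
    destruct (Dk_S_zero_inv a b Phi _ t y hab hnz H) as [c Hc].
  - exists (fun _ => c). intros x Hx. simpl. rewrite phi_power_0, <- (Hc x Hx). ring.
  - set (s := first_op t (S (S m))).
    assert (Hs : first_op (negb t) (S m) = s) by (symmetry; apply first_op_SS).
    pose proof (Dk_phi_power (S m) s (S m) (negb t) (le_n _) Hs) as Htop.
    rewrite Nat.eqb_refl in Htop.
    (* subtracting the right multiple of the top power kills the constant derivative *)
    set (be := - c / INR (fact (S m))).
    assert (Hlow : Dk a b Phi (negb t) (S m)
                     (fun x => 1 * y x + be * phi_power Phi x0 s (S m) x) (fun _ => 0)).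
    { eapply Dk_ext; [| | exact (Dk_lincomb a b Phi _ _ _ _ _ _ 1 be Hc Htop)]; auto.
      intros. unfold be. field. apply INR_fact_neq_0. }
    destruct (IH (negb t) _ Hlow) as [c' Hc']. rewrite Hs in Hc'.
    exists (fun i => if Nat.eqb i (S m) then - be else c' i).
    intros x Hx. simpl. rewrite Nat.eqb_refl.
    rewrite (sum_eq _ (fun i => c' i * phi_power Phi x0 s i x)).
    2: { intros j Hj. rewrite (proj2 (Nat.eqb_neq j (S m))) by lia. reflexivity. }
    rewrite <- Hc' by auto. ring.
Qed.

Lemma phi_power_fundamental_set t n :
  fundamental_set a b Phi t n (phi_power Phi x0 (first_op t (S n))).
Proof.
  split; [| split].
  - intros i Hi. unfold is_solution.
    eapply Dk_ext; [| | exact (Dk_phi_power i _ (S n) t ltac:(lia) eq_refl)]; auto.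
    intros. rewrite (proj2 (Nat.eqb_neq i (S n))) by lia. reflexivity.
  - apply phi_power_independent.
  - apply phi_power_spanning.
Qed.

End PhiPowers.

Theorem proposition3 (a b : R) (Phi : R -> R) (x0 : R)
  (hab : a < b)
  (hcont : continuous_on_cc a b Phi)
  (hnz : forall x, a <= x <= b -> Phi x <> 0)
  (hx0 : a <= x0 <= b) (n : nat) :
  fundamental_set a b Phi false n
    (fun i x => if Nat.odd n then Ycal Phi i x0 x else Ytcal Phi i x0 x) /\
  fundamental_set a b Phi true n
    (fun i x => if Nat.odd n then Ytcal Phi i x0 x else Ycal Phi i x0 x).
Proof.
  pose proof (phi_power_fundamental_set a b Phi x0 hab hcont hnz hx0 false n) as HD.
  pose proof (phi_power_fundamental_set a b Phi x0 hab hcont hnz hx0 true n) as HDt.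
  unfold first_op, phi_power in HD, HDt. rewrite odd_S in HD, HDt.
  destruct (Nat.odd n); split; assumption.
Qed.
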